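(* Let $X$ be a metric space, $f\in\Delta_1(X)$, and $\{x,y\}\in A(f)$. Then for every $z\in C(x,y)$ we have $\{x,z\}\in A(f)$ and $f(z)=f(y)+d(y,z)$.
   Context: $\Delta_1(X)$ is the set of 1-Lipschitz functions $f\colon X\to\mathbb R$ with $f(x)+f(y)\ge d(x,y)$ for all $x,y$. $A(f)$ is the set of unordered pairs $\{x,y\}$ with $f(x)+f(y)=d(x,y)$. $I(x,y)=\{v: d(x,v)+d(v,y)=d(x,y)\}$ and the cone $C(x,v)=\{y\in X: v\in I(x,y)\}$. *)

From Stdlib Require Import Reals.
Open Scope R_scope.

Record MetricSpace := {
  carrier :> Type;
  md : carrier -> carrier -> R;
  dist_refl : forall x, md x x = 0;
  dist_pos : forall x y, 0 <= md x y;
  dist_sym : forall x y, md x y = md y x;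
  dist_sep : forall x y, md x y = 0 -> x = y;
  dist_tri : forall x y z, md x z <= md x y + md y z
}.

Arguments md {m} x y.

Definition Delta1 (X : MetricSpace) (f : X -> R) : Prop :=
  (forall x y : X, Rabs (f x - f y) <= md x y) /\
  (forall x y : X, md x y <= f x + f y).

(* {x,y} in A(f): f(x)+f(y) = d(x,y) (symmetric condition, so unordered). *)
Definition inA (X : MetricSpace) (f : X -> R) (x y : X) : Prop :=
  f x + f y = md x y.

Definition interval (X : MetricSpace) (x y : X) : X -> Prop :=
  fun v => md x v + md v y = md x y.

Definition cone (X : MetricSpace) (x v : X) : X -> Prop :=
  fun y => interval X x y v.

From Pilot Require Import Defs.
From Stdlib Require Import Reals Lra.
Open Scope R_scope.

(* Along the geodesic x -> y -> z, the lower bound [d(x,z) <= f x + f z] and the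
   Lipschitz bound [f z <= f y + d(y,z)] squeeze [f x + f z] between
   [d(x,y) + d(y,z) = d(x,z)] and [f x + f y + d(y,z) = d(x,z)]. *)

Lemma Delta1_le_shift (X : MetricSpace) (f : X -> R) (y z : X) :
  Delta1 X f -> f z <= f y + md y z.
Proof.
  intros [Hlip _].
  pose proof (Rle_trans _ _ _ (RRle_abs (f z - f y)) (Hlip z y)).
  rewrite (Defs.dist_sym X z y) in *; lra.
Qed.

Lemma Delta1_dist_le_add (X : MetricSpace) (f : X -> R) (x z : X) :
  Delta1 X f -> md x z <= f x + f z.
Proof. intros [_ Hlow]; exact (Hlow x z). Qed.

Theorem lemma5p1 (X : MetricSpace) (f : X -> R) (x y : X) :
  Delta1 X f -> inA X f x y ->
  forall z : X, cone X x y z -> inA X f x z /\ f z = f y + md y z.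
Proof.
  intros Hf Hxy z Hz.
  unfold inA, cone, interval in *.
  pose proof (Delta1_le_shift X f y z Hf).
  pose proof (Delta1_dist_le_add X f x z Hf).
  split; lra.
Qed.
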